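(* Let $p\in(1,\infty)$ and $Z$ a countable discrete measure space, and fix a bijection $Z\cong\mathbb N$, giving the standard Schauder basis $\{e_i\}_{i\in\mathbb N}$ of $\ell^p(Z)$. Let $F_n$ be the coordinate projection onto the span of $e_1,\dots,e_n$. Then for every $K\in\mathcal K^*(\ell^p(Z))$ we have $\lim_{n\to\infty}F_nKF_n=K$ in $\mathcal K^*(\ell^p(Z))$, i.e. $\|F_nKF_n-K\|_{\max}\to0$.
   Context: An operator $T$ on $\ell^p(Z)$ is regarded as a matrix with respect to $\{e_i\}$ and $T^*$ denotes the transpose matrix. $T$ is a dual-operator if $T$ and $T^*$ are both bounded on $\ell^p(Z)$; its maximal norm is $\|T\|_{\max}=\max\{\|T\|,\|T^*\|\}$. $T$ is a compact dual-operator if $T$ and $T^*$ are both compact operators on $\ell^p(Z)$. $\mathcal K^*(\ell^p(Z))$ is the Banach space of compact dual-operators with the maximal norm. *)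

(* l^p(Z) with Z identified with nat via the fixed bijection. *)
From HB Require Import structures.
From mathcomp Require Import all_boot all_order all_algebra.
From mathcomp Require Import all_classical all_reals all_analysis.
Set Implicit Arguments. Unset Strict Implicit. Unset Printing Implicit Defensive.
Import Order.TTheory GRing.Theory Num.Theory.
Import numFieldNormedType.Exports.
Local Open Scope classical_set_scope.
Local Open Scope ring_scope.

Section Lp.
Variables (R : realType) (p : R).

Definition lp_partial (x : nat -> R) (n : nat) : R := \sum_(k < n) `|x k| `^ p.

Definition inlp (x : nat -> R) : Prop := cvgn (lp_partial x).

Definition lpnorm (x : nat -> R) : R := (limn (lp_partial x)) `^ (p^-1).

Definition bdd_op (T : (nat -> R) -> (nat -> R)) : Prop :=
  [/\ (forall x, inlp x -> inlp (T x)),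
      (forall (a : R) x y, inlp x -> inlp y ->
          T (fun k => a * x k + y k) = (fun k => a * T x k + T y k)) &
      exists C : R, forall x, inlp x -> lpnorm (T x) <= C * lpnorm x].

Definition opnorm (T : (nat -> R) -> (nat -> R)) : R :=
  sup [set r | exists x, [/\ inlp x, lpnorm x <= 1 & r = lpnorm (T x)]].

Definition ebasis (j : nat) : nat -> R := fun k => (k == j)%:R.
Definition mat (T : (nat -> R) -> (nat -> R)) (i j : nat) : R := T (ebasis j) i.

Definition transpose_of (S T : (nat -> R) -> (nat -> R)) : Prop :=
  forall i j, mat S i j = mat T j i.

Definition compact_op (T : (nat -> R) -> (nat -> R)) : Prop :=
  bdd_op T /\
  forall u : nat -> (nat -> R), (forall n, inlp (u n)) ->
    (exists C : R, forall n, lpnorm (u n) <= C) ->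
    exists phi : nat -> nat, (forall n, (phi n < phi n.+1)%N) /\
      exists y, inlp y /\
        (fun n => lpnorm (fun k => T (u (phi n)) k - y k)) @ \oo --> (0 : R).

Definition dual_op (T : (nat -> R) -> (nat -> R)) : Prop :=
  bdd_op T /\ exists S, bdd_op S /\ transpose_of S T.

Definition compact_dual_op (T : (nat -> R) -> (nat -> R)) : Prop :=
  compact_op T /\ exists S, compact_op S /\ transpose_of S T.

(* norm of T^*: T^* is the (unique on l^p) bounded operator with the
   transpose matrix; all such S have the same operator norm, so this sup
   is over a singleton when T is a dual-operator *)
Definition opnorm_transpose (T : (nat -> R) -> (nat -> R)) : R :=
  sup [set r | exists S, [/\ bdd_op S, transpose_of S T & r = opnorm S]].

Definition maxnorm (T : (nat -> R) -> (nat -> R)) : R :=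
  Num.max (opnorm T) (opnorm_transpose T).

(* coordinate projection onto span{e_0,...,e_{n-1}} *)
Definition Fproj (n : nat) (x : nat -> R) : nat -> R :=
  fun k => if (k < n)%N then x k else 0.

End Lp.

(* Write F_n K F_n - K = - F_n K (1 - F_n) - (1 - F_n) K.  The second term is
   uniformly small on the unit ball because the image of the ball under a compact
   operator has uniformly small tails.  If K (1 - F_n) were not uniformly small as
   well, truncating the tails (1 - F_n) x would give unit vectors w_k with disjoint
   supports and |K w_k| > e / 2.  Along a subsequence K w_k -> y, and then
   J |y| - o(J) <= |K (w_1 + ... + w_J)| <= |K| J^(1/p), forcing y = 0 since p > 1,
   which contradicts |K w_k| > e / 2.  The same holds for the transpose K^*, and the
   transpose of F_n K F_n - K is F_n K^* F_n - K^* because a bounded operator on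
   l^p is determined by its matrix. *)

From HB Require Import structures.
From mathcomp Require Import all_boot all_order all_algebra.
From mathcomp Require Import all_classical all_reals all_analysis.
From mathcomp Require Import ring lra.
Import Order.TTheory GRing.Theory Num.Theory.
Import numFieldNormedType.Exports.
Local Open Scope classical_set_scope.
Local Open Scope ring_scope.

Lemma powR_le {R : realType} {r a b : R} : 0 <= r -> 0 <= a -> a <= b ->
  a `^ r <= b `^ r.
Proof.
move=> r0 a0 ab; apply: (ge0_ler_powR r0) => //; rewrite nnegrE //.
exact: le_trans ab.
Qed.

Lemma powRK {R : realType} (r b : R) : r != 0 -> 0 <= b -> (b `^ r) `^ r^-1 = b.
Proof. by move=> r0 b0; rewrite -powRrM mulfV // powRr1. Qed.

Lemma strict_incr_geq (phi : nat -> nat) :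
  (forall n, phi n < phi n.+1)%N -> forall n, (n <= phi n)%N.
Proof. by move=> phi_incr; elim=> // n IH; exact: leq_ltn_trans IH (phi_incr n). Qed.

Section LpSpace.
Context {R : realType} {p : R} (p_ge1 : 1 <= p).

Let p_gt0 : 0 < p. Proof. exact: lt_le_trans ltr01 p_ge1. Qed.
Let p_neq0 : p != 0. Proof. by rewrite gt_eqF. Qed.

(** * The l^p norm *)

Definition lpsum (x : nat -> R) : R := limn (lp_partial p x).

Lemma lp_partial_ge0 x n : 0 <= lp_partial p x n.
Proof. by apply: sumr_ge0 => i _; exact: powR_ge0. Qed.

Lemma lp_partialS x n : lp_partial p x n.+1 = lp_partial p x n + `|x n| `^ p.
Proof. by rewrite /lp_partial big_ord_recr. Qed.

Lemma nondecreasing_lp_partial x : nondecreasing_seq (lp_partial p x).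
Proof. by apply/nondecreasing_seqP => n; rewrite lp_partialS lerDl powR_ge0. Qed.

Lemma lp_partial_le_lpsum x n : inlp p x -> lp_partial p x n <= lpsum x.
Proof.
by move=> x_lp; exact: nondecreasing_cvgn_le (nondecreasing_lp_partial x) x_lp n.
Qed.

Lemma inlp_lpsum_le x B :
  (forall n, lp_partial p x n <= B) -> inlp p x /\ lpsum x <= B.
Proof.
move=> xB; have x_lp : inlp p x.
  apply: nondecreasing_is_cvgn; first exact: nondecreasing_lp_partial.
  by exists B => _ [n _ <-].
by split=> //; apply: limr_le => //; exact: nearW.
Qed.

Lemma lpsum_ge0 x : inlp p x -> 0 <= lpsum x.
Proof.
by move=> x_lp; exact: le_trans (lp_partial_ge0 x 0) (lp_partial_le_lpsum x 0 x_lp).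
Qed.

Lemma lpnorm_ge0 x : 0 <= lpnorm p x.
Proof. exact: powR_ge0. Qed.

Lemma lpnorm_powR x : inlp p x -> lpnorm p x `^ p = lpsum x.
Proof. by move=> x_lp; rewrite -powRrM mulVf // powRr1 // lpsum_ge0. Qed.

Lemma lp_partial_le_lpnorm x n : inlp p x -> lp_partial p x n <= lpnorm p x `^ p.
Proof. by move=> x_lp; rewrite lpnorm_powR // lp_partial_le_lpsum. Qed.

Lemma inlp_lpnorm_le x B : 0 <= B ->
  (forall n, lp_partial p x n <= B `^ p) -> inlp p x /\ lpnorm p x <= B.
Proof.
move=> B0 /inlp_lpsum_le[x_lp xB]; split=> //.
rewrite /lpnorm -[leRHS](powRK p B p_neq0 B0).
by apply: powR_le; rewrite ?invr_ge0 ?(ltW p_gt0) ?lpsum_ge0.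
Qed.

Lemma lp_partial_dom x y n : (forall k, `|y k| <= `|x k|) ->
  lp_partial p y n <= lp_partial p x n.
Proof. by move=> yx; apply: ler_sum => k _; apply: powR_le => //; exact: ltW. Qed.

Lemma lpnorm_dom x y : inlp p x -> (forall k, `|y k| <= `|x k|) ->
  inlp p y /\ lpnorm p y <= lpnorm p x.
Proof.
move=> x_lp yx; apply: inlp_lpnorm_le (lpnorm_ge0 x) _ => n.
exact: le_trans (lp_partial_dom x y n yx) (lp_partial_le_lpnorm x n x_lp).
Qed.

Lemma lp_partialZ c x n : lp_partial p (c *: x) n = `|c| `^ p * lp_partial p x n.
Proof.
by rewrite /lp_partial mulr_sumr; apply: eq_bigr => k _; rewrite !fctE normrM powRM.
Qed.

Lemma lpsumZ c x : inlp p x -> inlp p (c *: x) /\ lpsum (c *: x) = `|c| `^ p * lpsum x.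
Proof.
move=> x_lp; have cvZ : lp_partial p (c *: x) @ \oo --> `|c| `^ p * lpsum x.
  by rewrite (funext (lp_partialZ c x)); exact: cvgM (cvg_cst _) x_lp.
by split; [exact: cvgP cvZ | exact: cvg_lim cvZ].
Qed.

Lemma lpnormZ c x : inlp p x -> inlp p (c *: x) /\ lpnorm p (c *: x) = `|c| * lpnorm p x.
Proof.
move=> x_lp; have [cx_lp cxE] := lpsumZ c x x_lp; split=> //.
by rewrite /lpnorm -/(lpsum _) cxE powRM ?powRK ?powR_ge0 ?lpsum_ge0.
Qed.

Lemma lp_partialN x : lp_partial p (- x) = lp_partial p x.
Proof. by apply/funext => n; apply: eq_bigr => k _; rewrite fctE normrN. Qed.

Lemma inlpN {x} : inlp p x -> inlp p (- x).
Proof. by rewrite /inlp lp_partialN. Qed.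

Lemma lpnormN x : lpnorm p (- x) = lpnorm p x.
Proof. by rewrite /lpnorm lp_partialN. Qed.

Lemma lpnorm_eq0 {x} : inlp p x -> lpnorm p x = 0 -> x = 0.
Proof.
move=> x_lp x0; apply/funext => k; apply/eqP; change (x k == 0); rewrite -normr_eq0.
suff le0 : `|x k| `^ p <= 0.
  by apply/eqP; apply: (@powR_eq0_eq0 _ _ p); apply/eqP; rewrite eq_le le0 powR_ge0.
have := lp_partial_le_lpnorm x k.+1 x_lp; rewrite x0 powR0 // lp_partialS => le.
by apply: le_trans _ le; rewrite lerDr lp_partial_ge0.
Qed.

Lemma lp_partial0 n : lp_partial p 0 n = 0.
Proof. by rewrite /lp_partial big1 // => k _; rewrite normr0 powR0. Qed.

Lemma inlp0 : inlp p 0.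
Proof. by rewrite /inlp (funext lp_partial0); exact: is_cvg_cst. Qed.

Lemma lpnorm0 : lpnorm p 0 = 0.
Proof. by rewrite /lpnorm (funext lp_partial0) lim_cst // powR0 // invr_neq0. Qed.

Lemma convex_powR_le (t u v : R) : 0 <= t <= 1 -> 0 <= u -> 0 <= v ->
  (t * u + (1 - t) * v) `^ p <= t * u `^ p + (1 - t) * v `^ p.
Proof.
move=> /andP[t0 t1] u0 v0; have := @convex_powR R p p_ge1 (Itv01 t0 t1) u v.
by rewrite !inE /= !in_itv /= u0 v0 !convRE => /(_ isT isT).
Qed.

Lemma lp_partial_conv_le1 t x y n : 0 <= t <= 1 ->
  lp_partial p x n <= 1 -> lp_partial p y n <= 1 ->
  lp_partial p (t *: x + (1 - t) *: y) n <= 1.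
Proof.
move=> t01 x1 y1; have /andP[t0 t1] := t01.
have pointwise k :
    `|(t *: x + (1 - t) *: y) k| `^ p <= t * `|x k| `^ p + (1 - t) * `|y k| `^ p.
  apply: le_trans _ (convex_powR_le _ _ _ t01 (normr_ge0 _) (normr_ge0 _)).
  apply: powR_le; [exact: ltW | exact: normr_ge0 |].
  rewrite !fctE; apply: le_trans (ler_normD _ _) _.
  by rewrite !normrM (ger0_norm t0) (ger0_norm (_ : 0 <= 1 - t)) ?subr_ge0.
rewrite /lp_partial in x1 y1 *.
apply: le_trans (ler_sum _ (fun (k : 'I_n) _ => pointwise k)) _.
by rewrite big_split /= -!mulr_sumr; nra.
Qed.

(* x + y is (a + b) times a convex combination of x / a and y / b. *)
Lemma lp_partialD_le x y a b n : 0 < a -> 0 < b ->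
  lp_partial p x n <= a `^ p -> lp_partial p y n <= b `^ p ->
  lp_partial p (x + y) n <= (a + b) `^ p.
Proof.
move=> a0 b0 xa yb; have ab0 : 0 < a + b by rewrite addr_gt0.
set t := a / (a + b).
have t01 : 0 <= t <= 1.
  by rewrite /t divr_ge0 ?(ltW a0) ?(ltW ab0) //= ler_pdivrMr // mul1r lerDl (ltW b0).
have normalized c z : 0 < c -> lp_partial p z n <= c `^ p ->
    lp_partial p (c^-1 *: z) n <= 1.
  move=> c0 zc; rewrite lp_partialZ gtr0_norm ?invr_gt0 //.
  have <- : c^-1 `^ p * c `^ p = 1.
    by rewrite -powRM ?invr_ge0 ?ltW // mulVf ?gt_eqF // powR1.
  by rewrite ler_wpM2l ?powR_ge0.
have -> : x + y = (a + b) *: (t *: (a^-1 *: x) + (1 - t) *: (b^-1 *: y)).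
  rewrite scalerDr !scalerA -[x in LHS]scale1r -[y in LHS]scale1r /t.
  by congr (_ *: _ + _ *: _); field; rewrite !gt_eqF.
rewrite lp_partialZ gtr0_norm // -[leRHS]mulr1 ler_wpM2l ?powR_ge0 //.
exact: lp_partial_conv_le1 t01 (normalized _ _ a0 xa) (normalized _ _ b0 yb).
Qed.

Lemma lpnormD_slack {x y} e : inlp p x -> inlp p y -> 0 < e ->
  inlp p (x + y) /\ lpnorm p (x + y) <= (lpnorm p x + e) + (lpnorm p y + e).
Proof.
move=> x_lp y_lp e0; have pos z : 0 < lpnorm p z + e by rewrite ltr_wpDl ?lpnorm_ge0.
have grow z n : inlp p z -> lp_partial p z n <= (lpnorm p z + e) `^ p.
  move=> z_lp; apply: le_trans (lp_partial_le_lpnorm z n z_lp) _.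
  by apply: powR_le; rewrite ?lpnorm_ge0 ?lerDl ?(ltW p_gt0) ?(ltW e0).
apply: inlp_lpnorm_le => [|n]; first exact: ltW (addr_gt0 (pos x) (pos y)).
exact: lp_partialD_le (pos x) (pos y) (grow x n x_lp) (grow y n y_lp).
Qed.

Lemma inlpD {x y} : inlp p x -> inlp p y -> inlp p (x + y).
Proof. by move=> x_lp y_lp; case: (lpnormD_slack 1 x_lp y_lp ltr01). Qed.

Lemma lpnormD_le {x y} : inlp p x -> inlp p y ->
  lpnorm p (x + y) <= lpnorm p x + lpnorm p y.
Proof.
move=> x_lp y_lp; apply/ler_addgt0Pr => e e0.
have [_] := lpnormD_slack (e / 2) x_lp y_lp (divr_gt0 e0 (ltr0Sn R 1)).
by rewrite addrACA -splitr.
Qed.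

Lemma inlpB {x y} : inlp p x -> inlp p y -> inlp p (x - y).
Proof. by move=> x_lp /inlpN; exact: inlpD. Qed.

Lemma lpnormB_le {x y} : inlp p x -> inlp p y ->
  lpnorm p (x - y) <= lpnorm p x + lpnorm p y.
Proof. by move=> x_lp /inlpN /(lpnormD_le x_lp); rewrite lpnormN. Qed.

Lemma lpnorm_distC x y : lpnorm p (x - y) = lpnorm p (y - x).
Proof. by rewrite -opprB lpnormN. Qed.

Lemma lpnorm_le_add_sub {x y} : inlp p x -> inlp p y ->
  lpnorm p x <= lpnorm p y + lpnorm p (x - y).
Proof.
move=> x_lp y_lp; have := lpnormD_le y_lp (inlpB x_lp y_lp).
by rewrite subrKC.
Qed.

Lemma inlp_sum I (r : seq I) (v : I -> nat -> R) :
  (forall i, inlp p (v i)) -> inlp p (\sum_(i <- r) v i).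
Proof.
move=> v_lp; elim: r => [|i r IH]; first by rewrite big_nil; exact: inlp0.
by rewrite big_cons; exact: inlpD (v_lp i) IH.
Qed.

Lemma lpnorm_sum_le I (r : seq I) (v : I -> nat -> R) : (forall i, inlp p (v i)) ->
  lpnorm p (\sum_(i <- r) v i) <= \sum_(i <- r) lpnorm p (v i).
Proof.
move=> v_lp; elim: r => [|i r IH]; first by rewrite !big_nil lpnorm0.
rewrite !big_cons; apply: le_trans (lpnormD_le (v_lp i) (inlp_sum _ r v v_lp)) _.
by rewrite lerD2l.
Qed.

Definition disjoint_supports (v : nat -> nat -> R) : Prop :=
  forall i j k, i != j -> v i k = 0 \/ v j k = 0.

Lemma lp_partial_disjointD x y n : (forall k, x k = 0 \/ y k = 0) ->
  lp_partial p (x + y) n = lp_partial p x n + lp_partial p y n.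
Proof.
move=> xy; rewrite /lp_partial -big_split; apply: eq_bigr => k _ /=.
by rewrite fctE; case: (xy k) => ->; rewrite normr0 powR0 // ?add0r ?addr0.
Qed.

Lemma lpnorm_disjoint_sum_le v J : (forall i, lpnorm p (v i) <= 1) ->
  (forall i, inlp p (v i)) -> disjoint_supports v ->
  lpnorm p (\sum_(i < J) v i) <= J%:R `^ p^-1.
Proof.
move=> v1 v_lp v_disj; apply: (inlp_lpnorm_le _ _ (powR_ge0 _ _) _).2 => n.
rewrite -powRrM mulVf // powRr1 //.
elim: J => [|J IH]; first by rewrite big_ord0 lp_partial0.
rewrite big_ord_recr /= lp_partial_disjointD.
  rewrite -natr1 lerD //; apply: le_trans (lp_partial_le_lpnorm _ n (v_lp J)) _.
  by have := powR_le (ltW p_gt0) (lpnorm_ge0 _) (v1 J); rewrite powR1.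
move=> k; have [vJk|vJk] := eqVneq (v J k) 0; [by right | left].
rewrite fct_sumE big1 // => i _.
have := v_disj i J k; rewrite neq_ltn ltn_ord => /(_ isT) [//|vJk0].
by rewrite vJk0 eqxx in vJk.
Qed.

(** * Coordinate projections and tails *)

Lemma Fproj_is_linear n : linear (@Fproj R n).
Proof.
move=> a x y; apply/funext => k; rewrite /Fproj !fctE.
by case: ifP; rewrite ?scaler0 ?addr0.
Qed.
HB.instance Definition _ n :=
  GRing.isLinear.Build R (nat -> R) (nat -> R) _ (@Fproj R n) (Fproj_is_linear n).

Definition tail n (x : nat -> R) : nat -> R := x - Fproj n x.

Lemma tail_is_linear n : linear (tail n).
Proof. by move=> a x y; rewrite /tail linearP scalerBr opprD addrACA. Qed.
HB.instance Definition _ n :=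
  GRing.isLinear.Build R (nat -> R) (nat -> R) _ (tail n) (tail_is_linear n).

Lemma tailE n x k : tail n x k = if (k < n)%N then 0 else x k.
Proof. by rewrite /tail /Fproj !fctE; case: ifP; rewrite ?subrr ?subr0. Qed.

Lemma Fproj0 (x : nat -> R) : Fproj 0 x = 0.
Proof. by apply/funext. Qed.

Lemma tail0 x : tail 0 x = x.
Proof. by rewrite /tail Fproj0 subr0. Qed.

Lemma Fproj_add_tail n x : Fproj n x + tail n x = x.
Proof. exact: subrKC. Qed.

Lemma tail_tail {m n} x : (m <= n)%N -> tail m (tail n x) = tail n x.
Proof.
move=> mn; apply/funext => k; rewrite !tailE; case: ifP => // km.
by rewrite (leq_trans km mn).
Qed.

Lemma Fproj_tail_eq0 m M x k : (k < m)%N || (M <= k)%N -> Fproj M (tail m x) k = 0.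
Proof.
move=> /orP[km|Mk]; rewrite /Fproj; last by rewrite ltnNge Mk.
by rewrite tailE km; case: ifP.
Qed.

Lemma inlp_Fproj n {x} : inlp p x -> inlp p (Fproj n x).
Proof.
move=> x_lp; apply: (lpnorm_dom x _ x_lp _).1 => k.
by rewrite /Fproj; case: ifP; rewrite ?normr0.
Qed.

Lemma lpnorm_Fproj_le n {x} : inlp p x -> lpnorm p (Fproj n x) <= lpnorm p x.
Proof.
move=> x_lp; apply: (lpnorm_dom x _ x_lp _).2 => k.
by rewrite /Fproj; case: ifP; rewrite ?normr0.
Qed.

Lemma inlp_tail n {x} : inlp p x -> inlp p (tail n x).
Proof. by move=> x_lp; exact: inlpB x_lp (inlp_Fproj n x_lp). Qed.

Lemma lpnorm_tail_le {m n x} : (n <= m)%N -> inlp p x ->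
  lpnorm p (tail m x) <= lpnorm p (tail n x).
Proof.
move=> nm x_lp; apply: (lpnorm_dom _ _ (inlp_tail n x_lp) _).2 => k.
rewrite !tailE; case: ifP => [_|km]; first by rewrite normr0.
by rewrite (contraFF (fun kn => leq_trans kn nm) km).
Qed.

Lemma lpnorm_tail_le_lpnorm n {x} : inlp p x -> lpnorm p (tail n x) <= lpnorm p x.
Proof. by move=> x_lp; have := lpnorm_tail_le (leq0n n) x_lp; rewrite tail0. Qed.

Lemma lp_partial_tail n x m :
  lp_partial p (tail n x) m + lp_partial p x n <= lp_partial p x (maxn m n).
Proof.
elim: m => [|m IH]; first by rewrite max0n /lp_partial big_ord0 add0r.
rewrite lp_partialS tailE; case: ltnP => [mn|nm].
  rewrite normr0 powR0 // addr0 (maxn_idPr mn).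
  by rewrite (maxn_idPr (ltnW mn)) in IH.
rewrite (maxn_idPl (leqW nm)) lp_partialS addrAC lerD2r.
by rewrite (maxn_idPl nm) in IH.
Qed.

Lemma lpnorm_tail_cvg0 {x} : inlp p x -> lpnorm p (tail n x) @[n --> \oo] --> 0.
Proof.
move=> x_lp; apply/cvgrPdist_le => e e0.
have /cvgrPdist_le/(_ _ (powR_gt0 p e0)) close_ev := x_lp.
apply: filterS close_ev => n close.
rewrite sub0r normrN ger0_norm ?lpnorm_ge0 //.
apply: (inlp_lpnorm_le _ _ (ltW e0) _).2 => m.
rewrite -/(lpsum x) ger0_norm ?subr_ge0 ?lp_partial_le_lpsum // in close.
have := lp_partial_tail n x m; have := lp_partial_le_lpsum x (maxn m n) x_lp.
by move=> *; lra.
Qed.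

Lemma lp_partial_ebasis j n : lp_partial p (ebasis R j) n = (j < n)%:R.
Proof.
elim: n => [|n IH]; first by rewrite /lp_partial big_ord0.
rewrite lp_partialS IH /ebasis; case: (ltngtP j n) => jn.
- by rewrite ltnS (ltnW jn) normr0 powR0 // addr0.
- by rewrite ltnS leqNgt jn normr0 powR0 // addr0.
- by rewrite jn ltnSn normr1 powR1 add0r.
Qed.

Lemma inlp_ebasis j : inlp p (ebasis R j).
Proof.
by apply: (inlp_lpsum_le _ 1 _).1 => n; rewrite lp_partial_ebasis; case: (j < n)%N.
Qed.

Lemma FprojS m (x : nat -> R) : Fproj m.+1 x = x m *: ebasis R m + Fproj m x.
Proof.
apply/funext => k; rewrite !fctE /Fproj /ebasis ltnS leq_eqVlt.
case: (ltngtP k m) => [km|mk|->] /=; rewrite ?scaler0 ?add0r ?addr0 //.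
exact: esym (mulr1 _).
Qed.

Lemma Fproj_ebasis n j : Fproj n (ebasis R j) = if (j < n)%N then ebasis R j else 0.
Proof.
apply/funext => k; rewrite /Fproj /ebasis.
by case: ifP => kn; case: ifP => jn //; case: eqVneq => // kj; rewrite kj jn in kn.
Qed.

(** * Bounded operators *)

Section BoundedOperator.
Context {T : (nat -> R) -> nat -> R} (T_bdd : bdd_op p T).

Lemma bdd_op_inlp {x} : inlp p x -> inlp p (T x).
Proof. by case: T_bdd => + _ _; apply. Qed.

Lemma bdd_opDZ a {x y} : inlp p x -> inlp p y -> T (a *: x + y) = a *: T x + T y.
Proof. by case: T_bdd => _ + _; apply. Qed.

Lemma bdd_opD {x y} : inlp p x -> inlp p y -> T (x + y) = T x + T y.
Proof. by move=> x_lp y_lp; have := bdd_opDZ 1 x_lp y_lp; rewrite !scale1r. Qed.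

Lemma bdd_op0 : T 0 = 0.
Proof. by have := bdd_opDZ (-1) inlp0 inlp0; rewrite !scaleN1r !addNr. Qed.

Lemma bdd_opB {x y} : inlp p x -> inlp p y -> T (x - y) = T x - T y.
Proof. by move=> x_lp y_lp; rewrite addrC -scaleN1r bdd_opDZ // scaleN1r addrC. Qed.

Lemma bdd_op_sum I (r : seq I) (v : I -> nat -> R) : (forall i, inlp p (v i)) ->
  T (\sum_(i <- r) v i) = \sum_(i <- r) T (v i).
Proof.
move=> v_lp; elim: r => [|i r IH]; first by rewrite !big_nil bdd_op0.
by rewrite !big_cons bdd_opD ?IH //; exact: inlp_sum.
Qed.

Lemma bdd_op_bound :
  exists2 C, 0 <= C & forall x, inlp p x -> lpnorm p (T x) <= C * lpnorm p x.
Proof.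
case: T_bdd => _ _ [C TC]; exists (Num.max C 0) => [|x x_lp].
  by rewrite le_max lexx orbT.
by apply: le_trans (TC x x_lp) _; rewrite ler_wpM2r ?lpnorm_ge0 ?le_max ?lexx.
Qed.

Lemma bdd_op_tail_cvg0 {x} : inlp p x -> lpnorm p (T (tail n x)) @[n --> \oo] --> 0.
Proof.
move=> x_lp; have [C C0 TC] := bdd_op_bound.
apply: (@squeeze_cvgr _ _ _ _ (fun=> 0) (fun n => C * lpnorm p (tail n x))).
- by apply: nearW => n; rewrite lpnorm_ge0 /=; exact: TC _ (inlp_tail n x_lp).
- exact: cvg_cst.
- by rewrite -(mulr0 C); exact: cvgM (cvg_cst C) (lpnorm_tail_cvg0 x_lp).
Qed.

Lemma bdd_op_sum_sub_le {w y d} J : (forall i, inlp p (w i)) -> inlp p y ->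
  (forall i, (i < J)%N -> lpnorm p (T (w i) - y) <= d) ->
  lpnorm p (T (\sum_(i < J) w i) - J%:R *: y) <= J%:R * d.
Proof.
move=> w_lp y_lp close.
rewrite (bdd_op_sum _ _ _ (fun i : 'I_J => w_lp i)) scaler_nat.
have -> : \sum_(i < J) T (w i) - y *+ J = \sum_(i < J) (T (w i) - y).
  by rewrite sumrB sumr_const card_ord.
have Twy_lp i : inlp p (T (w i) - y) := inlpB (bdd_op_inlp (w_lp i)) y_lp.
apply: le_trans (lpnorm_sum_le _ _ _ (fun i : 'I_J => Twy_lp i)) _.
apply: le_trans (ler_sum _ (fun (i : 'I_J) _ => close i (ltn_ord i))) _.
by rewrite sumr_const card_ord mulr_natl.
Qed.

End BoundedOperator.

Lemma bdd_op_eq_mat {A B} : bdd_op p A -> bdd_op p B ->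
  (forall i j, mat A i j = mat B i j) -> forall x, inlp p x -> A x = B x.
Proof.
move=> A_bdd B_bdd AB x x_lp.
have eq_Fproj m : A (Fproj m x) = B (Fproj m x).
  elim: m => [|m IH]; first by rewrite Fproj0 !bdd_op0.
  have [e_lp F_lp] := (inlp_ebasis m, inlp_Fproj m x_lp).
  rewrite FprojS !bdd_opDZ // IH; congr (_ *: _ + _).
  by apply/funext => i; exact: AB.
have diff_tail m : A x - B x = A (tail m x) - B (tail m x).
  have F_lp := inlp_Fproj m x_lp.
  rewrite /tail (bdd_opB A_bdd x_lp F_lp) (bdd_opB B_bdd x_lp F_lp) eq_Fproj.
  by rewrite opprB addrA subrK.
have Ax_lp := bdd_op_inlp A_bdd x_lp; have Bx_lp := bdd_op_inlp B_bdd x_lp.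
apply/subr0_eq/(lpnorm_eq0 (inlpB Ax_lp Bx_lp)).
have : (fun=> lpnorm p (A x - B x)) @ \oo --> 0.
  apply: (@squeeze_cvgr _ _ _ _ (fun=> 0)
    (fun m => lpnorm p (A (tail m x)) + lpnorm p (B (tail m x)))).
  - apply: nearW => m; rewrite lpnorm_ge0 (diff_tail m) /=.
    have t_lp := inlp_tail m x_lp.
    exact: lpnormB_le (bdd_op_inlp A_bdd t_lp) (bdd_op_inlp B_bdd t_lp).
  - exact: cvg_cst.
  - rewrite -(addr0 0).
    exact: cvgD (bdd_op_tail_cvg0 A_bdd x_lp) (bdd_op_tail_cvg0 B_bdd x_lp).
by move=> N_cvg0; rewrite -(cvg_lim _ N_cvg0) // lim_cst.
Qed.

Lemma transpose_unique {S1 S2 T} : bdd_op p S1 -> bdd_op p S2 ->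
  transpose_of S1 T -> transpose_of S2 T -> forall x, inlp p x -> S1 x = S2 x.
Proof.
by move=> S1_bdd S2_bdd S1T S2T; apply: bdd_op_eq_mat => // i j; rewrite S1T S2T.
Qed.

Lemma transpose_ofB {S1 S2 T1 T2 : (nat -> R) -> nat -> R} :
  transpose_of S1 T1 -> transpose_of S2 T2 ->
  transpose_of (fun x => S1 x - S2 x) (fun x => T1 x - T2 x).
Proof.
move=> S1T1 S2T2 i j; change (mat S1 i j - mat S2 i j = mat T1 j i - mat T2 j i).
by rewrite S1T1 S2T2.
Qed.

Lemma bdd_op_sub {A B} : bdd_op p A -> bdd_op p B -> bdd_op p (fun x => A x - B x).
Proof.
move=> A_bdd B_bdd; have [CA CA0 AC] := bdd_op_bound A_bdd.
have [CB CB0 BC] := bdd_op_bound B_bdd.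
split=> [x x_lp|a x y x_lp y_lp|].
- exact: inlpB (bdd_op_inlp A_bdd x_lp) (bdd_op_inlp B_bdd x_lp).
- change (A (a *: x + y) - B (a *: x + y) = a *: (A x - B x) + (A y - B y)).
  by rewrite (bdd_opDZ A_bdd) // (bdd_opDZ B_bdd) // scalerBr opprD addrACA.
- exists (CA + CB) => x x_lp; rewrite mulrDl.
  apply: le_trans (lpnormB_le (bdd_op_inlp A_bdd x_lp) (bdd_op_inlp B_bdd x_lp)) _.
  exact: lerD (AC x x_lp) (BC x x_lp).
Qed.

Definition compress n (T : (nat -> R) -> nat -> R) : (nat -> R) -> nat -> R :=
  fun x => Fproj n (T (Fproj n x)).

Lemma bdd_op_compress n {T} : bdd_op p T -> bdd_op p (compress n T).
Proof.
move=> T_bdd; have [C C0 TC] := bdd_op_bound T_bdd.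
have TF_lp x : inlp p x -> inlp p (T (Fproj n x)).
  by move=> x_lp; exact/(bdd_op_inlp T_bdd)/inlp_Fproj.
split=> [x x_lp|a x y x_lp y_lp|]; first exact/inlp_Fproj/TF_lp.
  change (compress n T (a *: x + y) = a *: compress n T x + compress n T y).
  rewrite /compress (linearP (Fproj n)).
  rewrite (bdd_opDZ T_bdd a (inlp_Fproj n x_lp) (inlp_Fproj n y_lp)).
  by rewrite (linearP (Fproj n)).
exists C => x x_lp; apply: le_trans (lpnorm_Fproj_le n (TF_lp x x_lp)) _.
exact: le_trans (TC _ (inlp_Fproj n x_lp)) (ler_wpM2l C0 (lpnorm_Fproj_le n x_lp)).
Qed.

Lemma compact_op_compress n {T} : compact_op p T -> compact_op p (compress n T).
Proof.
move=> [T_bdd T_cpt]; split=> [|u u_lp [C uC]]; first exact: bdd_op_compress.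
have Fu_lp k : inlp p (Fproj n (u k)) := inlp_Fproj n (u_lp k).
have Fu_bdd : exists C, forall k, lpnorm p (Fproj n (u k)) <= C.
  by exists C => k; exact: le_trans (lpnorm_Fproj_le n (u_lp k)) (uC k).
have [phi [phi_incr [y [y_lp TFu_y]]]] := T_cpt _ Fu_lp Fu_bdd.
exists phi; split=> //; exists (Fproj n y); split; first exact: inlp_Fproj.
apply: (@squeeze_cvgr _ _ _ _ (fun=> 0) _ _ _ _ (cvg_cst _) TFu_y).
apply: nearW => k; rewrite lpnorm_ge0 /=.
change (lpnorm p (Fproj n (T (Fproj n (u (phi k)))) - Fproj n y)
  <= lpnorm p (T (Fproj n (u (phi k))) - y)).
rewrite -(linearB (Fproj n)); apply: lpnorm_Fproj_le.
exact: inlpB (bdd_op_inlp T_bdd (Fu_lp _)) y_lp.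
Qed.

Lemma mat_compress n T i j : bdd_op p T ->
  mat (compress n T) i j = if (i < n)%N && (j < n)%N then mat T i j else 0.
Proof.
move=> T_bdd; rewrite /mat /compress Fproj_ebasis /Fproj.
by case: (j < n)%N; case: (i < n)%N; rewrite ?bdd_op0.
Qed.

Lemma transpose_compress n {S T} : bdd_op p S -> bdd_op p T ->
  transpose_of S T -> transpose_of (compress n S) (compress n T).
Proof. by move=> S_bdd T_bdd ST i j; rewrite !mat_compress // ST andbC. Qed.

(** * Compact operators *)

Lemma compact_op_tail_image {T e} : compact_op p T -> 0 < e ->
  \forall n \near \oo, forall x, inlp p x -> lpnorm p x <= 1 ->
    lpnorm p (tail n (T x)) <= e.
Proof.
move=> [T_bdd T_cpt] e_gt0.
suff [n0 small] : exists n0, forall x, inlp p x -> lpnorm p x <= 1 ->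
    lpnorm p (tail n0 (T x)) <= e.
  apply: filterS (nbhs_infty_ge n0) => n n0n x x_lp x1.
  exact: le_trans (lpnorm_tail_le n0n (bdd_op_inlp T_bdd x_lp)) (small x x_lp x1).
apply: contrapT => no_n0.
have bad n : exists x, [/\ inlp p x, lpnorm p x <= 1 & e < lpnorm p (tail n (T x))].
  apply: contrapT => none; apply: no_n0; exists n => x x_lp x1.
  by rewrite leNgt; apply/negP => lt; apply: none; exists x.
have [u u_bad] := choice bad.
have u_lp n : inlp p (u n) by case: (u_bad n).
have u_bdd : exists C, forall n, lpnorm p (u n) <= C by exists 1 => n; case: (u_bad n).
have [phi [phi_incr [y [y_lp Tu_y]]]] := T_cpt u u_lp u_bdd.
have e2 : 0 < e / 2 by rewrite divr_gt0.
have e3 : 0 < e / 3 by rewrite divr_gt0.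
have [k1 _ Tu_close] := cvgr0_norm_le _ Tu_y _ e2.
have [k2 _ y_tail] := cvgr0_norm_le _ (lpnorm_tail_cvg0 y_lp) _ e3.
pose k := maxn k1 k2; pose n := phi k.
have [_ _ big] := u_bad n.
have d_lp : inlp p (T (u n) - y) := inlpB (bdd_op_inlp T_bdd (u_lp n)) y_lp.
have : lpnorm p (tail n (T (u n))) <= e / 2 + e / 3.
  rewrite -(subrK y (T (u n))) linearD.
  apply: le_trans (lpnormD_le (inlp_tail n d_lp) (inlp_tail n y_lp)) (lerD _ _).
    apply: le_trans (lpnorm_tail_le_lpnorm n d_lp) _.
    by have := Tu_close k (leq_maxl k1 k2); rewrite ger0_norm ?lpnorm_ge0.
  have := y_tail n (leq_trans (leq_maxr k1 k2) (strict_incr_geq _ phi_incr k)).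
  by rewrite ger0_norm ?lpnorm_ge0.
have third : e / 2 + e / 3 < e by lra.
by move=> le; have := lt_trans (lt_le_trans big le) third; rewrite ltxx.
Qed.

Lemma truncate_block {T e} m {x} : bdd_op p T -> 0 < e -> inlp p x ->
  e < lpnorm p (T (tail m x)) ->
  exists2 M, (m <= M)%N & e / 2 < lpnorm p (T (Fproj M (tail m x))).
Proof.
move=> T_bdd e_gt0 x_lp big; have z_lp := inlp_tail m x_lp.
have e2 : 0 < e / 2 by rewrite divr_gt0.
have [M0 _ small] := cvgr0_norm_le _ (bdd_op_tail_cvg0 T_bdd z_lp) _ e2.
pose M := maxn M0 m; exists M; first exact: leq_maxr.
have := small M (leq_maxl M0 m); rewrite /= (ger0_norm (lpnorm_ge0 _)) => tail_small.
have [Fz_lp tz_lp] := (inlp_Fproj M z_lp, inlp_tail M z_lp).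
have := lpnormD_le (bdd_op_inlp T_bdd Fz_lp) (bdd_op_inlp T_bdd tz_lp).
rewrite -(bdd_opD T_bdd Fz_lp tz_lp) Fproj_add_tail => le.
rewrite -(ltrD2r (e / 2)) -splitr; apply: lt_le_trans big (le_trans le _).
by rewrite lerD2l.
Qed.

Lemma disjoint_blocks {T e} : bdd_op p T -> 0 < e ->
  (forall n, exists2 x, inlp p x /\ lpnorm p x <= 1 & e < lpnorm p (T (tail n x))) ->
  exists w, [/\ forall k, lpnorm p (w k) <= 1, forall k, inlp p (w k),
    disjoint_supports w & forall k, e / 2 < lpnorm p (T (w k))].
Proof.
move=> T_bdd e_gt0 bad.
have block m : exists Mx : nat * (nat -> R), [/\ (m <= Mx.1)%N, inlp p Mx.2,
    lpnorm p Mx.2 <= 1 & e / 2 < lpnorm p (T (Fproj Mx.1 (tail m Mx.2)))].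
  have [x [x_lp x1] big] := bad m.
  by have [M mM half] := truncate_block m T_bdd e_gt0 x_lp big; exists (M, x).
have [g g_block] := choice block.
pose m k := iter k (fun j => (g j).1) 0%N.
pose w k := Fproj (m k.+1) (tail (m k) (g (m k)).2).
have m_mono : {homo m : i j / (i <= j)%N}.
  by apply: homo_leq leqnn leq_trans _ => k; case: (g_block (m k)).
have disj_lt i j k : (i < j)%N -> w i k = 0 \/ w j k = 0.
  move=> ij; case: (ltnP k (m i.+1)) => [k_lt|k_ge]; [right | left]; apply: Fproj_tail_eq0.
    by rewrite (leq_trans k_lt (m_mono _ _ ij)).
  by rewrite k_ge orbT.
exists w; split=> [k|k|i j k|k]; last by case: (g_block (m k)).
- have [_ x_lp x1 _] := g_block (m k).
  apply: le_trans (lpnorm_Fproj_le _ (inlp_tail _ x_lp)) _.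
  exact: le_trans (lpnorm_tail_le_lpnorm _ x_lp) x1.
- by have [_ x_lp _ _] := g_block (m k); exact/inlp_Fproj/inlp_tail.
- rewrite neq_ltn => /orP[ij|ji]; first exact: disj_lt.
  by have [|] := disj_lt j i k ji; [right | left].
Qed.

Section StrictExponent.
Hypothesis p_gt1 : 1 < p.

Lemma exists_nat_powR_lt {C d : R} : 0 <= C -> 0 < d ->
  exists2 J : nat, (0 < J)%N & C * J%:R `^ p^-1 < J%:R * d.
Proof.
move=> C0 d0; set r := 1 - p^-1.
have r0 : 0 < r by rewrite subr_gt0 invf_lt1.
set J := (Num.truncn ((C / d + 1) `^ r^-1)).+1; exists J => //.
have J0 : 0 < J%:R :> R by rewrite ltr0Sn.
have big : C / d + 1 <= J%:R `^ r.
  have B0 : 0 <= C / d + 1 by rewrite addr_ge0 // divr_ge0 // ltW.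
  rewrite -[leLHS](powRr1 B0) -[X in _ `^ X](mulVf (lt0r_neq0 r0)) powRrM.
  exact: powR_le (ltW r0) (powR_ge0 _ _) (ltW (truncnS_gt _)).
have -> : J%:R * d = J%:R `^ p^-1 * (J%:R `^ r * d).
  rewrite mulrA -powRD; last by rewrite (gt_eqF J0) implybT.
  by rewrite /r addrC subrK powRr1 // ltW.
rewrite mulrC ltr_pM2l ?powR_gt0 //; apply: lt_le_trans (ler_wpM2r (ltW d0) big).
by rewrite mulrDl mul1r divfK ?gt_eqF // ltrDl.
Qed.

Lemma bdd_op_disjoint_lim_eq0 {T v y} : bdd_op p T ->
  (forall i, lpnorm p (v i) <= 1) -> (forall i, inlp p (v i)) -> disjoint_supports v ->
  inlp p y -> lpnorm p (T (v i) - y) @[i --> \oo] --> 0 -> y = 0.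
Proof.
move=> T_bdd v1 v_lp v_disj y_lp Tv_y; have [C C0 TC] := bdd_op_bound T_bdd.
apply: (lpnorm_eq0 y_lp); apply/eqP; rewrite eq_le lpnorm_ge0 andbT.
apply/ler_addgt0Pr => e e0; rewrite add0r.
have e2 : 0 < e / 2 by rewrite divr_gt0.
have [K0 _ close] := cvgr0_norm_le _ Tv_y _ e2.
have [J J0 CJ] := exists_nat_powR_lt C0 e2.
pose w i := v (K0 + i)%N; pose s := \sum_(i < J) w i.
have w_lp i : inlp p (w i) := v_lp _.
have s_lp : inlp p s := inlp_sum _ _ (fun i : 'I_J => w i) (fun i => w_lp i).
have w_disj : disjoint_supports w.
  by move=> i j k ij; apply: v_disj; rewrite eqn_add2l.
have s_le : lpnorm p s <= J%:R `^ p^-1.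
  exact: lpnorm_disjoint_sum_le w J (fun i => v1 _) w_lp w_disj.
have Ts_Jy : lpnorm p (T s - J%:R *: y) <= J%:R * (e / 2).
  apply: (bdd_op_sum_sub_le T_bdd) => // i _.
  by have := close (K0 + i)%N (leq_addr _ _); rewrite ger0_norm ?lpnorm_ge0.
have [Jy_lp JyE] := lpnormZ J%:R y y_lp; rewrite normr_nat in JyE.
have Ts_le : lpnorm p (T s) <= J%:R * (e / 2).
  exact: le_trans (TC s s_lp) (le_trans (ler_wpM2l C0 s_le) (ltW CJ)).
have J_gt0 : 0 < J%:R :> R by rewrite ltr0n.
rewrite -(ler_pM2l J_gt0) [e in X in _ <= X]splitr mulrDr -JyE.
apply: le_trans (lpnorm_le_add_sub Jy_lp (bdd_op_inlp T_bdd s_lp)) _.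
by rewrite lpnorm_distC; exact: lerD Ts_le Ts_Jy.
Qed.

Lemma compact_op_tail_domain {T e} : compact_op p T -> 0 < e ->
  \forall n \near \oo, forall x, inlp p x -> lpnorm p x <= 1 ->
    lpnorm p (T (tail n x)) <= e.
Proof.
move=> [T_bdd T_cpt] e_gt0.
suff [n0 small] : exists n0, forall x, inlp p x -> lpnorm p x <= 1 ->
    lpnorm p (T (tail n0 x)) <= e.
  apply: filterS (nbhs_infty_ge n0) => n n0n x x_lp x1.
  rewrite -(tail_tail x n0n); apply: small; first exact: inlp_tail.
  exact: le_trans (lpnorm_tail_le_lpnorm n x_lp) x1.
apply: contrapT => no_n0.
have bad n : exists2 x, inlp p x /\ lpnorm p x <= 1 & e < lpnorm p (T (tail n x)).
  apply: contrapT => none; apply: no_n0; exists n => x x_lp x1.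
  by rewrite leNgt; apply/negP => lt; apply: none; exists x.
have [w [w1 w_lp w_disj Tw_big]] := disjoint_blocks T_bdd e_gt0 bad.
have [phi [phi_incr [y [y_lp Tw_y]]]] := T_cpt w w_lp (ex_intro _ 1 w1).
have {}Tw_y : lpnorm p (T (w (phi k)) - y) @[k --> \oo] --> 0 := Tw_y.
have phi_lt : {homo phi : i j / (i < j)%N} := homo_ltn ltn_trans phi_incr.
have y0 : y = 0.
  apply: (bdd_op_disjoint_lim_eq0 T_bdd (fun k => w1 (phi k)) (fun k => w_lp (phi k)))
    y_lp Tw_y.
  move=> i j k; rewrite neq_ltn => ij; apply: w_disj.
  by rewrite neq_ltn; case/orP: ij => /phi_lt ->; rewrite ?orbT.
have [k0 _ close] := cvgr0_norm_le _ Tw_y _ (divr_gt0 e_gt0 (ltr0Sn R 1)).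
have := close k0 (leqnn k0); rewrite y0 subr0 (ger0_norm (lpnorm_ge0 _)) => small.
by have := lt_le_trans (Tw_big (phi k0)) small; rewrite ltxx.
Qed.

Lemma compress_approx {T e} : compact_op p T -> 0 < e ->
  \forall n \near \oo, forall x, inlp p x -> lpnorm p x <= 1 ->
    lpnorm p (compress n T x - T x) <= e.
Proof.
move=> T_cpt e_gt0; have T_bdd := T_cpt.1; have e2 : 0 < e / 2 by rewrite divr_gt0.
apply: filterS2 (compact_op_tail_image T_cpt e2) (compact_op_tail_domain T_cpt e2).
move=> n image domain x x_lp x1.
have Tt_lp := bdd_op_inlp T_bdd (inlp_tail n x_lp).
have Tx_lp := bdd_op_inlp T_bdd x_lp.
have -> : compress n T x - T x = (Fproj n (T x) - T x) - Fproj n (T (tail n x)).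
  have Fx : Fproj n x = x - tail n x by rewrite /tail opprB addrC subrK.
  rewrite /compress Fx (bdd_opB T_bdd x_lp (inlp_tail n x_lp)).
  by rewrite (linearB (Fproj n)) addrAC.
apply: le_trans (lpnormB_le (inlpB (inlp_Fproj n Tx_lp) Tx_lp) (inlp_Fproj n Tt_lp)) _.
rewrite lpnorm_distC -/(tail n (T x)) [e]splitr lerD //; first exact: image.
exact: le_trans (lpnorm_Fproj_le n Tt_lp) (domain x x_lp x1).
Qed.

End StrictExponent.

(** * Operator norms *)

Lemma opnorm_le {A c} :
  (forall x, inlp p x -> lpnorm p x <= 1 -> lpnorm p (A x) <= c) -> 0 <= opnorm p A <= c.
Proof.
move=> Ac; rewrite /opnorm; set E := [set r | _].
have E0 : E (lpnorm p (A 0)).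
  by exists 0; split; [exact: inlp0 | rewrite lpnorm0 ler01 | by []].
have ubE : ubound E c by move=> _ [x [x_lp x1 ->]]; exact: Ac.
apply/andP; split; last by apply: ge_sup ubE; exists (lpnorm p (A 0)).
apply: le_trans (lpnorm_ge0 (A 0)) _.
have supE : has_sup E by split; [exists (lpnorm p (A 0)) | exists c].
exact: sup_upper_bound supE _ E0.
Qed.

Lemma maxnorm_le {A c} : 0 <= c ->
  (forall x, inlp p x -> lpnorm p x <= 1 -> lpnorm p (A x) <= c) ->
  (forall S, bdd_op p S -> transpose_of S A ->
    forall x, inlp p x -> lpnorm p x <= 1 -> lpnorm p (S x) <= c) ->
  0 <= maxnorm p A <= c.
Proof.
move=> c0 Ac SAc; have /andP[A_ge0 A_le] := opnorm_le Ac.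
rewrite /maxnorm le_max A_ge0 ge_max A_le /= /opnorm_transpose.
set E := [set r | _]; have ubE : ubound E c.
  by move=> _ [S [S_bdd SA ->]]; have /andP[] := opnorm_le (SAc S S_bdd SA).
have [[r Er]|E0] := pselect (exists r, E r); first by apply: ge_sup ubE; exists r.
suff -> : E = set0 by rewrite sup0.
by apply/seteqP; split => r // Er; apply: E0; exists r.
Qed.

End LpSpace.

Theorem mainTheorem12 (R : realType) (p : R) (hp : 1 < p)
  (K : (nat -> R) -> (nat -> R)) (hK : compact_dual_op p K) :
  (forall n : nat, compact_dual_op p (fun x => Fproj n (K (Fproj n x)))) /\
  (fun n : nat => maxnorm p (fun x k => Fproj n (K (Fproj n x)) k - K x k))
    @ \oo --> (0 : R).
Proof.
have p_ge1 : 1 <= p := ltW hp; have [K_cpt [S [S_cpt SK]]] := hK.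
have [K_bdd S_bdd] := (K_cpt.1, S_cpt.1).
split=> [n|].
  split; first exact (compact_op_compress p_ge1 n K_cpt).
  exists (compress n S); split; first exact (compact_op_compress p_ge1 n S_cpt).
  exact (transpose_compress p_ge1 n S_bdd K_bdd SK).
apply/cvgrPdist_le => e e_gt0.
apply: filterS2 (compress_approx p_ge1 hp K_cpt e_gt0)
  (compress_approx p_ge1 hp S_cpt e_gt0) => n approxK approxS.
have SnK := transpose_ofB (transpose_compress p_ge1 n S_bdd K_bdd SK) SK.
have Sn_bdd := bdd_op_sub p_ge1 (bdd_op_compress p_ge1 n S_bdd) S_bdd.
have /andP[D_ge0 D_le] : 0 <= maxnorm p (fun x => compress n K x - K x) <= e.
  apply: (maxnorm_le p_ge1 (ltW e_gt0) approxK) => S' S'_bdd S'D x x_lp x1.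
  by rewrite (transpose_unique p_ge1 S'_bdd Sn_bdd S'D SnK x x_lp); exact: approxS.
by rewrite sub0r normrN ger0_norm.
Qed.
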